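(* Let $k\ge2$, $n\ge1$ be integers, let $\bar{\mathcal{P}}\in\mathbb{R}^{[k,n]}$ be a columnwise-substochastic tensor, $\alpha\in[0,1)$, and let $\mathbf{v}\in\mathbb{R}^n$ be a positive stochastic vector. Then every nonnegative solution $\mathbf{y}_*$ of the MLPPR system $(\mathbf{e}^T\mathbf{y})^{k-2}\mathbf{y}-\alpha\bar{\mathcal{P}}\mathbf{y}^{k-1}=\mathbf{v}$ (equivalently, every fixed point $\mathbf{y}_*=\Phi(\mathbf{y}_* )$ in $\Delta$ of the map $\Phi(\mathbf{y}):=(1+\alpha\mathbf{e}^T(\bar{\mathcal{P}}\mathbf{y}^{k-1}))^{-\frac{k-2}{k-1}}(\mathbf{v}+\alpha\bar{\mathcal{P}}\mathbf{y}^{k-1})$) is a positive vector.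
   Context: For $\mathcal{P}\in\mathbb{R}^{[k,n]}$ (real tensors of order $k$, dimension $n$) and $\mathbf{y}\in\mathbb{R}^n$, $(\mathcal{P}\mathbf{y}^{k-1})_i=\sum_{i_2,\dots,i_k}p_{i i_2\dots i_k}y_{i_2}\cdots y_{i_k}$. $\bar{\mathcal{P}}$ is columnwise-substochastic if its entries are nonnegative and $\sum_{i}\bar p_{i i_2\dots i_k}\le1$ for all $i_2,\dots,i_k$. $\mathbf{e}$ is the all-ones vector; a stochastic vector is nonnegative with entries summing to $1$. $\Delta:=\{\mathbf{y}\in\mathbb{R}^n_+:\mathbf{e}^T\mathbf{y}\le(1-\alpha)^{-\frac{1}{k-1}}\}$. *)

From HB Require Import structures.
From mathcomp Require Import all_boot all_order all_algebra.
From mathcomp Require Import reals exp.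
Set Implicit Arguments. Unset Strict Implicit. Unset Printing Implicit Defensive.
Import Order.TTheory GRing.Theory Num.Theory.
Local Open Scope ring_scope.

(* A real tensor of order k and dimension n is represented as
   P i (i_2,...,i_k), with the first index i : 'I_n and the remaining
   k-1 indices packed in a finite function 'I_(k.-1) -> 'I_n. *)
Definition tensor (R : realType) (k n : nat) :=
  'I_n -> {ffun 'I_(k.-1) -> 'I_n} -> R.

Definition tapply (R : realType) (k n : nat) (P : tensor R k n)
  (y : 'I_n -> R) : 'I_n -> R :=
  fun i => \sum_(t : {ffun 'I_(k.-1) -> 'I_n}) P i t * \prod_(j < k.-1) y (t j).

Definition col_substochastic (R : realType) (k n : nat) (P : tensor R k n) :=
  (forall i t, 0 <= P i t) /\ (forall t, \sum_(i < n) P i t <= 1).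

Definition esum (R : realType) (n : nat) (y : 'I_n -> R) := \sum_(i < n) y i.

Definition nonneg_vec (R : realType) (n : nat) (y : 'I_n -> R) :=
  forall i, 0 <= y i.
Definition pos_vec (R : realType) (n : nat) (y : 'I_n -> R) :=
  forall i, 0 < y i.
Definition stochastic (R : realType) (n : nat) (v : 'I_n -> R) :=
  nonneg_vec v /\ esum v = 1.

Definition Delta (R : realType) (k n : nat) (alpha : R) (y : 'I_n -> R) :=
  nonneg_vec y /\ esum y <= powR (1 - alpha) (- (1 / (k.-1)%:R)).

Definition Phi (R : realType) (k n : nat) (P : tensor R k n) (alpha : R)
  (v y : 'I_n -> R) : 'I_n -> R :=
  fun i => powR (1 + alpha * esum (tapply P y))
                (- ((k.-2)%:R / (k.-1)%:R)) * (v i + alpha * tapply P y i).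

From HB Require Import structures.
From mathcomp Require Import all_boot all_order all_algebra.
From mathcomp Require Import reals exp.
Import Order.TTheory GRing.Theory Num.Theory.
Local Open Scope ring_scope.

(* For y >= 0 the vector v + alpha P y^(k-1) is positive, since v is.  In the
   MLPPR system it equals (e^T y)^(k-2) y, a nonnegative multiple of y, so no
   y_i can vanish; and Phi(y) is that same vector scaled by a positive power. *)

Section NonnegTensor.

Variables (R : realType) (k n : nat) (P : tensor R k n) (alpha : R).
Hypothesis P_ge0 : forall i t, 0 <= P i t.
Hypothesis alpha_ge0 : 0 <= alpha.

Lemma tapply_ge0 (y : 'I_n -> R) i : nonneg_vec y -> 0 <= tapply P y i.
Proof.
move=> y_ge0; apply: sumr_ge0 => t _.
by apply: mulr_ge0 => //; apply: prodr_ge0 => j _.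
Qed.

Lemma source_gt0 (v y : 'I_n -> R) i :
  pos_vec v -> nonneg_vec y -> 0 < v i + alpha * tapply P y i.
Proof.
move=> v_gt0 y_ge0; rewrite addrC ltr_wpDl //.
by rewrite mulr_ge0 // tapply_ge0.
Qed.

Lemma mlppr_solution_gt0 (v y : 'I_n -> R) :
  pos_vec v -> nonneg_vec y ->
  (forall i, (esum y) ^+ (k - 2) * y i - alpha * tapply P y i = v i) ->
  pos_vec y.
Proof.
move=> v_gt0 y_ge0 y_sol i.
have scaled_y_gt0 : 0 < (esum y) ^+ (k - 2) * y i.
  by rewrite -[_ * y i](subrK (alpha * tapply P y i)) y_sol source_gt0.
have esum_ge0 : 0 <= esum y by apply: sumr_ge0.
by move: scaled_y_gt0; rewrite mulr_ge0_gt0 ?exprn_ge0 // => /andP[].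
Qed.

Lemma Phi_gt0 (v y : 'I_n -> R) :
  pos_vec v -> nonneg_vec y -> pos_vec (Phi P alpha v y).
Proof.
move=> v_gt0 y_ge0 i; rewrite mulr_gt0 ?source_gt0 // powR_gt0 //.
rewrite ltr_wpDr // mulr_ge0 //.
by apply: sumr_ge0 => j _; apply: tapply_ge0.
Qed.

End NonnegTensor.

Theorem corollary3p7 (R : realType) (k n : nat) (P : tensor R k n)
  (alpha : R) (v : 'I_n -> R) :
  (2 <= k)%N -> (1 <= n)%N ->
  col_substochastic P ->
  0 <= alpha -> alpha < 1 ->
  pos_vec v -> stochastic v ->
  (forall y : 'I_n -> R, nonneg_vec y ->
     (forall i, (esum y) ^+ (k - 2) * y i - alpha * tapply P y i = v i) ->
     pos_vec y)
  /\
  (forall y : 'I_n -> R, Delta k alpha y -> Phi P alpha v y = y -> pos_vec y).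
Proof.
move=> _ _ [P_ge0 _] alpha_ge0 _ v_gt0 _; split.
  by move=> y; apply: mlppr_solution_gt0.
by move=> y [y_ge0 _] <-; apply: Phi_gt0.
Qed.
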